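(* Let $n\ge 2$ and let $\dot{\mathbf x}=\mathbf f(\sigma,\mathbf x)$ be a multistable regulatory system (MSRS) as defined in the context, with $f_k(\sigma,\mathbf x)=-l(x_k)+\sigma\frac{g(x_k)}{P(x_1,\dots,x_n)+h(x_k)}$; fix $\sigma>0$. Let $\mathbf r=(q,\dots,q)\in\mathbb R_{>0}^n$ be an equilibrium (a diagonal equilibrium). Put $D_n(\mathbf x)=-\frac{P(\mathbf x)+h(x_n)}{l(x_n)}$, $$\tau=\frac{\partial f_n}{\partial x_n}(\mathbf r),\qquad \xi=\frac{\frac{\partial P}{\partial x_{n-1}}(\mathbf r)}{D_n(\mathbf r)},\qquad G_1=\tau-\xi,\qquad G_2=\tau+(n-1)\xi .$$ Then $\det\left(\lambda I-J_{\mathbf f}(\mathbf r)\right)=(\lambda-G_1)^{n-1}(\lambda-G_2)$, where $J_{\mathbf f}=\left[\frac{\partial f_i}{\partial x_j}\right]_{i,j=1}^n$ is the Jacobian matrix with respect to $\mathbf x$.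
   Context: A system of ODEs $\frac{dx_k}{dt}=f_k(\sigma,x_1,\dots,x_n)$, $k=1,\dots,n$, is called a multistable regulatory system (MSRS) if $f_k(\sigma,x_1,\dots,x_n)=-l(x_k)+\sigma\frac{g(x_k)}{P(x_1,\dots,x_n)+h(x_k)}$, where $l,g,h$ are real functions of one real variable and $P$ is a real function of $n$ real variables (all differentiable), and: (1) $\sigma$ is a positive parameter; (2) $P$ is symmetric, i.e. unchanged under interchanging any two of its arguments; (3) for every $k$ and every $(x_1,\dots,x_n)\in\mathbb R_{>0}^n$, $P(x_1,\dots,x_n)+h(x_k)>0$; (4) $l(z)\neq 0$ and for every $\sigma>0$ the function $z\mapsto \sigma\frac{g(z)}{l(z)}-h(z)$ has at most one extreme point for $z\in\mathbb R_{>0}$. For a given $\sigma$, a point $\mathbf r\in\mathbb R_{>0}^n$ is an equilibrium if $f_1(\sigma,\mathbf r)=\dots=f_n(\sigma,\mathbf r)=0$. *)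

From HB Require Import structures.
From mathcomp Require Import all_boot all_order all_algebra.
From mathcomp Require Import all_classical all_reals all_analysis.
From mathcomp Require Import perm.
Set Implicit Arguments. Unset Strict Implicit. Unset Printing Implicit Defensive.
Import Order.TTheory GRing.Theory Num.Theory.
Import numFieldNormedType.Exports.
Local Open Scope ring_scope.

(* Points of R^n are row vectors 'rV[R]_n; coordinate k of x is x 0 k. *)

Definition partial (R : realType) (n : nat) (F : 'rV[R]_n -> R) (j : 'I_n)
  (x : 'rV[R]_n) : R := 'D_(delta_mx 0 j) F x.

Definition msrs_f (R : realType) (n : nat) (l g h : R -> R) (P : 'rV[R]_n -> R)
  (sigma : R) (k : 'I_n) (x : 'rV[R]_n) : R :=
  - l (x 0 k) + sigma * (g (x 0 k) / (P x + h (x 0 k))).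

Definition msrs_jacobian (R : realType) (n : nat) (l g h : R -> R)
  (P : 'rV[R]_n -> R) (sigma : R) (x : 'rV[R]_n) : 'M[R]_n :=
  \matrix_(i, j) partial (msrs_f l g h P sigma i) j x.

Definition symmetric_fun (R : realType) (n : nat) (P : 'rV[R]_n -> R) : Prop :=
  forall (i j : 'I_n) (x : 'rV[R]_n), P (col_perm (tperm i j) x) = P x.

Definition extreme_point_pos (R : realType) (F : R -> R) (z : R) : Prop :=
  0 < z /\ exists e : R, 0 < e /\
    ((forall y, 0 < y -> `|y - z| < e -> F y <= F z) \/
     (forall y, 0 < y -> `|y - z| < e -> F z <= F y)).

Definition at_most_one_extreme_point (R : realType) (F : R -> R) : Prop :=
  forall z1 z2, extreme_point_pos F z1 -> extreme_point_pos F z2 -> z1 = z2.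

Definition is_MSRS (R : realType) (n : nat) (l g h : R -> R)
  (P : 'rV[R]_n -> R) (sigma : R) : Prop :=
  [/\ (forall z : R, differentiable l z),
      (forall z : R, differentiable g z),
      (forall z : R, differentiable h z),
      (forall x : 'rV[R]_n, differentiable P x) &
   [/\ 0 < sigma,
       symmetric_fun P,
       (forall (k : 'I_n) (x : 'rV[R]_n), (forall i, 0 < x 0 i) ->
          0 < P x + h (x 0 k)),
       (forall z : R, 0 < z -> l z != 0) &
       (forall s : R, 0 < s ->
          at_most_one_extreme_point (fun z => s * (g z / l z) - h z))]].

Definition msrs_equilibrium (R : realType) (n : nat) (l g h : R -> R)
  (P : 'rV[R]_n -> R) (sigma : R) (r : 'rV[R]_n) : Prop :=
  (forall i, 0 < r 0 i) /\ forall k, msrs_f l g h P sigma k r = 0.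

From HB Require Import structures.
From mathcomp Require Import all_boot all_order all_algebra.
From mathcomp Require Import all_classical all_reals all_analysis.
From mathcomp Require Import perm ring.
Import Order.TTheory GRing.Theory Num.Theory.
Import numFieldNormedType.Exports.
Local Open Scope ring_scope.

(* By the symmetry of P, the restrictions of P to the coordinate axes through a
   diagonal point r all coincide, so every diagonal entry of the Jacobian at r
   equals tau and every off-diagonal entry equals the same number; at an
   equilibrium, sigma g(q) = l(q) (P(r) + h(q)) turns the latter into xi.  A
   matrix with constant diagonal d and constant off-diagonal e has determinant
   (d - e)^(n-1) (d + (n-1) e): adding all columns to the first and then
   subtracting the first row from the others makes it triangular. *)

Section DetDiagOffdiag.
Variables (S : comNzRingType) (n : nat).

Definition colsum0_mx : 'M[S]_n.+1 := \matrix_(i, j) ((j == 0) || (i == j))%:R.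

Definition subrow0_mx : 'M[S]_n.+1 :=
  \matrix_(i, j) ((i == j)%:R - ((i != 0) && (j == 0))%:R).

Lemma det_colsum0_mx : \det colsum0_mx = 1.
Proof.
rewrite det_trig ?big1 // => [i _|]; first by rewrite mxE eqxx orbT.
apply/forallP => i; apply/forallP => j; apply/implyP => lt_ij.
have /negbTE ne_ij : i != j by rewrite -(inj_eq val_inj) neq_ltn lt_ij.
by rewrite mxE ne_ij orbF; case: (j =P 0) lt_ij => [-> //|].
Qed.

Lemma det_subrow0_mx : \det subrow0_mx = 1.
Proof.
rewrite det_trig ?big1 // => [i _|]; first by rewrite mxE eqxx andNb subr0.
apply/forallP => i; apply/forallP => j; apply/implyP => lt_ij.
have /negbTE ne_ij : i != j by rewrite -(inj_eq val_inj) neq_ltn lt_ij.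
by rewrite mxE ne_ij sub0r; case: (j =P 0) lt_ij => [-> //|_ _]; rewrite andbF oppr0.
Qed.

Lemma mulmx_colsum0 (A : 'M[S]_n.+1) i j :
  (A *m colsum0_mx) i j = if j == 0 then \sum_k A i k else A i j.
Proof.
rewrite mxE; case: eqP => [->|/eqP nz_j].
  by apply: eq_bigr => k _; rewrite mxE eqxx mulr1.
rewrite (bigD1 j) //= big1 => [|k /negbTE ne_kj]; last first.
  by rewrite mxE (negbTE nz_j) ne_kj mulr0.
by rewrite mxE (negbTE nz_j) eqxx mulr1 addr0.
Qed.

Lemma mulmx_subrow0 (A : 'M[S]_n.+1) i j :
  (subrow0_mx *m A) i j = A i j - (i != 0)%:R * A 0 j.
Proof.
rewrite mxE (eq_bigr (fun k => (i == k)%:R * A k j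
                     - ((i != 0) && (k == 0))%:R * A k j)); last first.
  by move=> k _; rewrite mxE mulrBl.
rewrite sumrB (bigD1 i) //= eqxx mul1r big1 ?addr0 => [|k /negbTE ne_ki]; last first.
  by rewrite eq_sym ne_ki mul0r.
rewrite (bigD1 0) //= eqxx andbT big1 ?addr0 // => k /negbTE nz_k.
by rewrite nz_k andbF mul0r.
Qed.

Lemma det_diag_offdiag (d e : S) :
  \det (\matrix_(i, j) (if i == j then d else e) : 'M[S]_n.+1)
    = (d - e) ^+ n * (d + e *+ n).
Proof.
set A := \matrix_(i, j) _.
have rowsumA i : \sum_k A i k = d + e *+ n.
  rewrite (bigD1 i) //= mxE eqxx (eq_bigr (fun=> e)) ?sumr_const ?cardC1 ?card_ord //.
  by move=> k /negbTE ne_ki; rewrite mxE eq_sym ne_ki.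
set T := subrow0_mx *m (A *m colsum0_mx).
have -> : \det A = \det T by rewrite !det_mulmx det_colsum0_mx det_subrow0_mx mul1r mulr1.
have TE i j : T i j = if j == 0 then (i == 0)%:R * (d + e *+ n)
                      else if i == 0 then e else (i == j)%:R * (d - e).
  rewrite mulmx_subrow0 !mulmx_colsum0 !rowsumA.
  have [-> | nz_i] := eqVneq i 0; rewrite ?eqxx ?(negbTE nz_i) /= ?mul0r ?mul1r ?subr0.
    by case: eqP => // /eqP nz_j; rewrite mxE [0 == j]eq_sym (negbTE nz_j).
  case: eqP => [_|/eqP nz_j]; first by rewrite subrr.
  by rewrite !mxE [0 == j]eq_sym (negbTE nz_j); case: eqP; rewrite ?mul1r ?mul0r ?subrr.
rewrite -det_tr det_trig; last first.
  apply/forallP => i; apply/forallP => j; apply/implyP => lt_ij.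
  have /negbTE ne_ji : j != i by rewrite -(inj_eq val_inj) neq_ltn lt_ij orbT.
  have /negbTE nz_j : j != 0 by rewrite -(inj_eq val_inj) -lt0n (leq_ltn_trans _ lt_ij).
  by rewrite mxE TE nz_j ne_ji !mul0r if_same.
rewrite big_ord_recl mulrC mxE TE eqxx mul1r; congr (_ * _).
rewrite (eq_bigr (fun=> d - e)) ?prodr_const ?card_ord // => i _.
by rewrite mxE TE eqxx mul1r.
Qed.

End DetDiagOffdiag.

Lemma char_poly_diag_offdiag (S : comNzRingType) n (d e : S) :
  char_poly (\matrix_(i, j) (if i == j then d else e) : 'M[S]_n.+1)
    = ('X - (d - e)%:P) ^+ n * ('X - (d + e *+ n)%:P).
Proof.
rewrite /char_poly.
have -> : char_poly_mx (\matrix_(i, j) (if i == j then d else e) : 'M[S]_n.+1)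
    = \matrix_(i, j) (if i == j then 'X - d%:P else - e%:P).
  by apply/matrixP => i j; rewrite !mxE; case: eqP; rewrite ?mulr1n ?mulr0n ?sub0r.
rewrite det_diag_offdiag polyCB polyCD polyCMn.
congr (_ ^+ _ * _); first by rewrite opprK opprB addrA addrAC.
by rewrite mulNrn opprD addrA.
Qed.

Lemma derive_line (R : realType) n (F : 'rV[R]_n -> R) (x v : 'rV[R]_n) :
  'D_v F x = 'D_1 (fun t : R => F (t *: v + x)) 0.
Proof.
rewrite /derive; congr lim; f_equal; apply/funext => t /=.
by rewrite scale0r add0r addr0 -[t%:A]/(t * 1) mulr1.
Qed.

Lemma derivable_line (R : realType) n (F : 'rV[R]_n -> R) (x v : 'rV[R]_n) :
  derivable F x v -> derivable (fun t : R => F (t *: v + x)) 0 1.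
Proof.
rewrite /derivable; congr (cvg _); f_equal; apply/funext => t /=;
  by rewrite scale0r add0r addr0 -[t%:A]/(t * 1) mulr1.
Qed.

Lemma symmetric_fun_axis {R : realType} {n} {F : 'rV[R]_n -> R} i j (c t : R) :
  symmetric_fun F ->
  F (t *: delta_mx 0 i + const_mx c) = F (t *: delta_mx 0 j + const_mx c).
Proof.
move=> symF; rewrite -(symF i j); congr F; apply/matrixP => a b; rewrite !mxE.
have -> : (tperm i j b == i) = (b == j).
  apply/eqP/eqP => [tb_i|->]; last exact: tpermR.
  by rewrite -(tpermK i j b) tb_i tpermL.
by [].
Qed.

Lemma partial_symmetric_const {R : realType} {n} {F : 'rV[R]_n -> R} (c : R) i j :
  symmetric_fun F -> partial F i (const_mx c) = partial F j (const_mx c).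
Proof.
move=> symF; rewrite /partial !derive_line.
by under eq_fun do rewrite (symmetric_fun_axis i j _ _ symF).
Qed.

Section MSRSPartials.
Variables (R : realType) (n : nat) (l g h : R -> R) (P : 'rV[R]_n -> R).
Variables (sigma q : R).
Local Notation f := (msrs_f l g h P sigma).
Local Notation r := (const_mx q : 'rV[R]_n).

Lemma msrs_f_axis i j t :
  let x := t * (i == j)%:R + q in
  f i (t *: delta_mx 0 j + r) = - l x + sigma * (g x / (P (t *: delta_mx 0 j + r) + h x)).
Proof. by rewrite /msrs_f !mxE eqxx. Qed.

Lemma partial_msrs_f_diag i j :
  symmetric_fun P -> partial (f i) i r = partial (f j) j r.
Proof.
move=> symP; rewrite /partial !derive_line.
suff -> : (fun t => f i (t *: delta_mx 0 i + r)) = (fun t => f j (t *: delta_mx 0 j + r)) by [].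
by apply/funext => t; rewrite !msrs_f_axis !eqxx (symmetric_fun_axis i j _ _ symP).
Qed.

Lemma partial_msrs_f_offdiag i j :
  differentiable P r -> P r + h q != 0 -> i != j ->
  partial (f i) j r = - (sigma * (g q / (P r + h q))) / (P r + h q) * partial P j r.
Proof.
move=> dP den_neq0 /negbTE ne_ij.
pose phi t := P (t *: delta_mx 0 j + r).
have phi0 : phi 0 = P r by rewrite /phi scale0r add0r.
have dphi : is_derive (0 : R) (1 : R) phi (partial P j r).
  rewrite /partial derive_line; apply: derivableP.
  by apply: derivable_line; exact: diff_derivable.
have dden : is_derive (0 : R) (1 : R) (fun t => phi t + h q) (partial P j r).
  by rewrite -[partial P j r]addr0; apply: is_deriveD.
have den0_neq0 : phi 0 + h q != 0 by rewrite phi0.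
have dline := is_deriveD (is_derive_cst (- l q) (0 : R) (1 : R))
  (is_deriveZ (sigma * g q) (@is_deriveV _ (fun t => phi t + h q) _ _ _ den0_neq0 dden)).
rewrite {1}/partial derive_line.
under eq_fun do rewrite msrs_f_axis ne_ij mulr0 add0r mulrA.
rewrite (@derive_val _ _ _ _ _ _ _ dline) add0r phi0.
change ((sigma * g q) * (- (P r + h q) ^- 2 * partial P j r) =
        - (sigma * (g q / (P r + h q))) / (P r + h q) * partial P j r).
by field.
Qed.

End MSRSPartials.

(* n = m.+2 (i.e. n >= 2); x_n is coordinate ord_max, x_{n-1} is inord m. *)
Theorem theorem3 (R : realType) (m : nat) (l g h : R -> R)
  (P : 'rV[R]_(m.+2) -> R) (sigma q : R) :
  is_MSRS l g h P sigma ->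
  0 < q ->
  msrs_equilibrium l g h P sigma (const_mx q) ->
  let r : 'rV[R]_(m.+2) := const_mx q in
  let Dn := - (P r + h q) / l q in
  let tau := partial (msrs_f l g h P sigma ord_max) ord_max r in
  let xi := partial P (inord m) r / Dn in
  let G1 := tau - xi in
  let G2 := tau + m.+1%:R * xi in
  char_poly (msrs_jacobian l g h P sigma r)
    = ('X - G1%:P) ^+ m.+1 * ('X - G2%:P).
Proof.
move=> [_ _ _ dP [_ symP den_gt0 l_neq0 _]] _ [r_gt0 eq_r] r Dn tau xi G1 G2.
have rE a : r 0 a = q by rewrite mxE.
have den_neq0 : P r + h q != 0 by rewrite -(rE ord_max) gt_eqF ?den_gt0.
have lq_neq0 : l q != 0 by rewrite l_neq0 // -(rE ord_max).
have equil : sigma * (g q / (P r + h q)) = l q.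
  by apply/eqP; rewrite -subr_eq0 -(eq_r ord_max) /msrs_f rE addrC.
have -> : msrs_jacobian l g h P sigma r = \matrix_(i, j) (if i == j then tau else xi).
  apply/matrixP => i j; rewrite !mxE; have [<-|ne_ij] := eqVneq i j.
    exact: partial_msrs_f_diag.
  rewrite partial_msrs_f_offdiag // equil (partial_symmetric_const q j (inord m) symP).
  by rewrite /xi /Dn; field; rewrite lq_neq0 den_neq0.
by rewrite char_poly_diag_offdiag /G1 /G2 mulr_natl.
Qed.
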